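(* Let $\mathscr T$ be a functor satisfying (T1)–(T4), let $\mathcal M_1,\mathcal M_2$ be complete orthomodular lattices and $k\colon\mathcal M_1\to\mathcal M_2$ an ortholattice isomorphism. Then the map $\Gamma(k)\colon\Gamma(\mathcal M_1)\to\Gamma(\mathcal M_2)$, $\Gamma(k)(A)=\{k\circ a\circ k^{-1}\mid a\in A\}$, is a $\mathscr T\mathbb{ODA}$-morphism, i.e. a bijective morphism of involutive generalized dynamic algebras.
   Context: $\Gamma(\mathcal M)=\mathscr P(\mathscr T(\mathbf{Lin}(\mathcal M)))$. An involutive unital quantale is $(Q,\bigsqcup,\odot,{}^*,e)$: complete join-semilattice $Q$, associative $\odot$ distributing over arbitrary joins in each argument, unit $e$, ${}^*$ with $x^{**}=x$, $(x\odot y)^*=y^*\odot x^*$, $(\bigsqcup x_i)^*=\bigsqcup x_i^*$. An involutive generalized dynamic algebra (IDA) is such a quantale with ${\sim}\colon K\to K$ satisfying, for all $x,y$ and families $(x_i)$: ${\sim}(x\odot{\sim}{\sim}y)={\sim}(x\odot y)$; ${\sim}(\bigsqcup{\sim}{\sim}x_i)={\sim}(\bigsqcup x_i)$; $({\sim}x)^*={\sim}x$; ${\sim}{\sim}({\sim}{\sim}x\odot y)={\sim}({\sim}x\sqcup{\sim}({\sim}x\sqcup y))$. Test set $\widetilde K=\{{\sim}k\}$; $\bigvee W={\sim}{\sim}\bigsqcup W$; $w^\perp={\sim}w$; $k\preceq l$ iff $\bigvee\{k,l\}=l$; $k\bullet v={\sim}{\sim}(k\odot v)$; $k\equiv l$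 iff $k\bullet w=l\bullet w$ for all $w\in\widetilde K$. A morphism of IDAs preserves arbitrary joins, $\odot$, ${}^*$, unit, ${\sim}$ (category $\mathbb{IDA}$); semi-Foulis means $(\widetilde K,\preceq,{}^\perp)$ is a complete orthomodular lattice. $\mathbb{IM}$: involutive monoids and homomorphisms. For a complete orthomodular lattice $\mathcal M$: $\pi_m(x)=m\wedge(m^\perp\vee x)$; $\mathbf{Lin}(\mathcal M)$ is the set of maps $f$ admitting $f^*$ with $f(x)\le y^\perp\iff x\le f^*(y)^\perp$, an IDA under pointwise joins, composition, ${}^*$, $\mathrm{id}$, ${\sim}f=\pi_{f(1)^\perp}$. For an involutive submonoid $L\supseteq\{\pi_m\}$, $\mathscr P(L)$ is the IDA of subsets of $L$ with union, setwise composition $A\odot B=\{a\circ b\}$, $A^*=\{a^*\}$, unit $\{\mathrm{id}_M\}$, ${\sim}A=\{\pi_{(\bigvee_{a\in A}a(1))^\perp}\}$. $\mathscr T\colon\mathbb{IDA}\to\mathbb{IM}$ satisfies: (T1) $\widetilde K\subseteq\mathscr T(K)\subseteq K$, $\mathscr T(K)$ an involutive submonoid; (T2) for semi-Foulis $\mathfrak K$ with $s=t\iff s\equiv t$ on $\mathscr T(K)$, $k\mapsto k\bullet(-)$ is an isomorphism $\mathscr T(\mathfrak K)\to\mathscr T(\mathbf{Lin}(\widetilde{\mathfrak K}))$; (T3) $f\mapsto\{f\}$ is an isomorphism $\mathscr T(\mathbf{Lin}(\mathcal M))\to\mathscr T(\mathscr P(\mathscr T(\mathbf{Lin}(\mathcal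 M))))$; (T4) $\mathscr T(f)$ is the restriction of $f$. An ortholattice isomorphism is a bijection $g$ with $m\le n\iff g(m)\le g(n)$ and $g(m^\perp)=g(m)^\perp$. *)

From Stdlib Require Import ClassicalEpsilon.

Set Implicit Arguments.
Unset Strict Implicit.

Record OrthoSig := { car : Type; ole : car -> car -> Prop; operp : car -> car }.

Section Ortho.
Variable O : OrthoSig.
Notation le := (@ole O).
Notation perp := (@operp O).

Definition is_lub (W : car O -> Prop) (s : car O) : Prop :=
  (forall w, W w -> le w s) /\ (forall u, (forall w, W w -> le w u) -> le s u).

(* the supremum of W (chosen classically; x0 is a default if none exists) *)
Definition osup (x0 : car O) (W : car O -> Prop) : car O :=
  match excluded_middle_informative (exists s, is_lub W s) with
  | left p => proj1_sig (constructive_indefinite_description _ p)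
  | right _ => x0
  end.

Definition join2 (a b : car O) : car O := osup a (fun z => z = a \/ z = b).
Definition meet2 (a b : car O) : car O := perp (join2 (perp a) (perp b)).
Definition otop (x0 : car O) : car O := osup x0 (fun _ => True).

Definition is_cOML : Prop :=
  (forall x, le x x) /\
  (forall x y, le x y -> le y x -> x = y) /\
  (forall x y z, le x y -> le y z -> le x z) /\
  (forall W : car O -> Prop, exists s, is_lub W s) /\
  (forall x, perp (perp x) = x) /\
  (forall x y, le x y -> le (perp y) (perp x)) /\
  (forall x y, le y (join2 x (perp x))) /\
  (forall x y, le x y -> y = join2 x (meet2 y (perp x))).

Definition sasaki (m x : car O) : car O := meet2 m (join2 (perp m) x).

Definition adjoint (f g : car O -> car O) : Prop :=
  forall x y, le (f x) (perp y) <-> le x (perp (g y)).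

Definition LinT : Type := { f : car O -> car O | exists g, adjoint f g }.

Definition idLin : LinT :=
  exist _ (fun x => x)
    (ex_intro (fun g => adjoint (fun x => x) g) (fun x => x) (fun x y => iff_refl _)).

(* package a map as an element of Lin (identity if it admits no adjoint;
   on complete OMLs all uses below are genuinely in Lin) *)
Definition toLin (f : car O -> car O) : LinT :=
  match excluded_middle_informative (exists g, adjoint f g) with
  | left p => exist _ f p
  | right _ => idLin
  end.

Definition linStar (f : LinT) : LinT :=
  toLin (proj1_sig (constructive_indefinite_description _ (proj2_sig f))).
Definition linComp (f g : LinT) : LinT :=
  toLin (fun x => proj1_sig f (proj1_sig g x)).
Definition linJoin (F : LinT -> Prop) : LinT :=
  toLin (fun x => osup x (fun y => exists f, F f /\ y = proj1_sig f x)).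
Definition linNeg (f : LinT) : LinT :=
  toLin (fun x => sasaki (perp (proj1_sig f (otop x))) x).

End Ortho.

Record IDAsig := {
  icar : Type;
  ijoin : (icar -> Prop) -> icar;
  imul : icar -> icar -> icar;
  istar : icar -> icar;
  iunit : icar;
  ineg : icar -> icar }.

Definition image {A B : Type} (f : A -> B) (W : A -> Prop) : B -> Prop :=
  fun y => exists w, W w /\ y = f w.

Definition pair {A : Type} (a b : A) : A -> Prop := fun z => z = a \/ z = b.

Section IDA.
Variable K : IDAsig.
Notation J := (@ijoin K).
Notation mul := (@imul K).
Notation st := (@istar K).
Notation ng := (@ineg K).

Definition ile (x y : icar K) : Prop := J (pair x y) = y.

Definition is_IDA : Prop :=
  (forall x, ile x x) /\
  (forall x y, ile x y -> ile y x -> x = y) /\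
  (forall x y z, ile x y -> ile y z -> ile x z) /\
  (forall W, (forall w, W w -> ile w (J W)) /\
             (forall u, (forall w, W w -> ile w u) -> ile (J W) u)) /\
  (forall x y z, mul x (mul y z) = mul (mul x y) z) /\
  (forall x, mul (@iunit K) x = x) /\ (forall x, mul x (@iunit K) = x) /\
  (forall x W, mul x (J W) = J (image (mul x) W)) /\
  (forall x W, mul (J W) x = J (image (fun w => mul w x) W)) /\
  (forall x, st (st x) = x) /\
  (forall x y, st (mul x y) = mul (st y) (st x)) /\
  (forall W, st (J W) = J (image st W)) /\
  (forall x y, ng (mul x (ng (ng y))) = ng (mul x y)) /\
  (forall W, ng (J (image (fun x => ng (ng x)) W)) = ng (J W)) /\
  (forall x, st (ng x) = ng x) /\
  (forall x y, ng (ng (mul (ng (ng x)) y)) = ng (J (pair (ng x) (ng (J (pair (ng x) y)))))).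

Definition tst (k : icar K) : Prop := exists l, k = ng l.
Definition tjoin (W : icar K -> Prop) : icar K := ng (ng (J W)).
Definition tle (k l : icar K) : Prop := tjoin (pair k l) = l.
Definition bullet (k v : icar K) : icar K := ng (ng (mul k v)).
Definition tequiv (k l : icar K) : Prop :=
  forall w, tst w -> bullet k w = bullet l w.

Definition TestT : Type := { k : icar K | tst k }.
Definition test_perp (w : TestT) : TestT :=
  exist _ (ng (proj1_sig w)) (ex_intro _ (proj1_sig w) eq_refl).
Definition TestSig : OrthoSig :=
  {| car := TestT; ole := fun k l => tle (proj1_sig k) (proj1_sig l);
     operp := test_perp |}.

Definition semiFoulis : Prop := is_cOML TestSig.

Definition bulletMap (k : icar K) : car TestSig -> car TestSig :=
  fun w => exist _ (bullet k (proj1_sig w))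
                 (ex_intro _ (ng (mul k (proj1_sig w))) eq_refl).
End IDA.

Definition IDA_morphism (K L : IDAsig) (f : icar K -> icar L) : Prop :=
  (forall W, f (@ijoin K W) = @ijoin L (image f W)) /\
  (forall x y, f (@imul K x y) = @imul L (f x) (f y)) /\
  (forall x, f (@istar K x) = @istar L (f x)) /\
  f (@iunit K) = @iunit L /\
  (forall x, f (@ineg K x) = @ineg L (f x)).

Definition Lin (O : OrthoSig) : IDAsig :=
  {| icar := LinT O; ijoin := @linJoin O; imul := @linComp O;
     istar := @linStar O; iunit := idLin O; ineg := @linNeg O |}.

Section Pow.
Variables (O : OrthoSig) (L : LinT O -> Prop).
Definition subL : Type := { a : LinT O | L a }.
Definition Pcar : Type := subL -> Prop.
Definition Pjoin (W : Pcar -> Prop) : Pcar := fun c => exists A, W A /\ A c.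
Definition Pmul (A B : Pcar) : Pcar :=
  fun c => exists a b, A a /\ B b /\ proj1_sig c = linComp (proj1_sig a) (proj1_sig b).
Definition Pstar (A : Pcar) : Pcar :=
  fun c => exists a, A a /\ proj1_sig c = linStar (proj1_sig a).
Definition Punit : Pcar := fun c => proj1_sig c = idLin O.
Definition Pneg (A : Pcar) : Pcar :=
  fun c => proj1_sig c =
    toLin (fun x => sasaki (@operp O
       (osup x (fun y => exists a, A a /\ y = proj1_sig (proj1_sig a) (otop x)))) x).
Definition Pow : IDAsig :=
  {| icar := Pcar; ijoin := Pjoin; imul := Pmul; istar := Pstar;
     iunit := Punit; ineg := Pneg |}.
End Pow.

(* The functor T is given by its object part T(K) (a subset of K, by (T1)). *)
Definition TFun : Type := forall K : IDAsig, icar K -> Prop.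

Definition Gamma (T : TFun) (O : OrthoSig) : IDAsig := Pow (T (Lin O)).

Definition IM_iso (K L : IDAsig) (P : icar K -> Prop) (Q : icar L -> Prop)
  (phi : icar K -> icar L) : Prop :=
  (forall x, P x -> Q (phi x)) /\
  (forall x y, P x -> P y -> phi x = phi y -> x = y) /\
  (forall z, Q z -> exists x, P x /\ phi x = z) /\
  (forall x y, P x -> P y -> phi (@imul K x y) = @imul L (phi x) (phi y)) /\
  (forall x, P x -> phi (@istar K x) = @istar L (phi x)) /\
  phi (@iunit K) = @iunit L.

Definition T1 (T : TFun) : Prop :=
  forall K, is_IDA K ->
    (forall k, tst k -> T K k) /\ T K (@iunit K) /\
    (forall x y, T K x -> T K y -> T K (@imul K x y)) /\
    (forall x, T K x -> T K (@istar K x)).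

Definition T2 (T : TFun) : Prop :=
  forall K, is_IDA K -> semiFoulis K ->
    (forall s t, T K s -> T K t -> (s = t <-> tequiv s t)) ->
    (forall k, T K k -> exists g, adjoint (bulletMap k) g) /\
    IM_iso (T K) (T (Lin (TestSig K))) (fun k => toLin (bulletMap k)).

Definition T3 (T : TFun) : Prop :=
  forall O, is_cOML O ->
    IM_iso (K := Lin O) (L := Gamma T O) (T (Lin O)) (T (Gamma T O))
      (fun f => fun c => proj1_sig c = f).

Definition T4 (T : TFun) : Prop :=
  forall (K L : IDAsig) (f : icar K -> icar L),
    is_IDA K -> is_IDA L -> IDA_morphism f -> forall x, T K x -> T L (f x).

Definition ortho_iso (O1 O2 : OrthoSig) (k : car O1 -> car O2) (kinv : car O2 -> car O1) : Prop :=
  (forall m, kinv (k m) = m) /\ (forall n, k (kinv n) = n) /\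
  (forall m n, @ole O1 m n <-> @ole O2 (k m) (k n)) /\
  (forall m, k (@operp O1 m) = @operp O2 (k m)).

Definition GammaMap (T : TFun) (O1 O2 : OrthoSig) (k : car O1 -> car O2)
  (kinv : car O2 -> car O1) : icar (Gamma T O1) -> icar (Gamma T O2) :=
  fun A b => exists a, A a /\
    proj1_sig (proj1_sig b) = (fun x => k (proj1_sig (proj1_sig a) (kinv x))).

Definition bijectiveF {A B : Type} (f : A -> B) : Prop :=
  (forall x y, f x = f y -> x = y) /\ (forall z, exists x, f x = z).

(* An ortholattice isomorphism k preserves all suprema and Sasaki projections,
   so conjugation a |-> k o a o k^-1 is an IDA isomorphism Lin(M1) -> Lin(M2),
   whose inverse is conjugation by k^-1.  Since Lin(M) is an IDA, (T4) restricts
   both conjugations to mutually inverse maps between T(Lin M1) and T(Lin M2);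
   Gamma(k) is the direct image along this bijection on subsets, hence a
   bijective morphism of the powerset IDAs.  Only (T4) is needed. *)

From Stdlib Require Import ClassicalEpsilon ProofIrrelevance.
From Stdlib Require Import FunctionalExtensionality PropExtensionality.

Set Implicit Arguments.
Unset Strict Implicit.

Local Notation val := (@proj1_sig _ _).

Lemma sig_val_inj (A : Type) (P : A -> Prop) (u v : sig P) : val u = val v -> u = v.
Proof. apply eq_sig_hprop. intros; apply proof_irrelevance. Qed.

Lemma pred_ext (X : Type) (A B : X -> Prop) : (forall x, A x <-> B x) -> A = B.
Proof.
  intro e. apply functional_extensionality. intro x. apply propositional_extensionality, e.
Qed.

Section CompleteOML.
Variable O : OrthoSig.
Hypothesis HO : is_cOML O.
Local Notation le := (@ole O).
Local Notation perp := (@operp O).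
Implicit Types (a b c d m x y z u w : car O) (W : car O -> Prop).

Lemma ole_refl x : le x x. Proof. apply HO. Qed.
Lemma ole_antisym x y : le x y -> le y x -> x = y. Proof. apply HO. Qed.
Lemma ole_trans x y z : le x y -> le y z -> le x z. Proof. apply HO. Qed.
Lemma operpK x : perp (perp x) = x. Proof. apply HO. Qed.
Lemma operp_anti x y : le x y -> le (perp y) (perp x). Proof. apply HO. Qed.
Lemma oml_law x y : le x y -> y = join2 x (meet2 y (perp x)). Proof. apply HO. Qed.

Lemma operp_reflect x y : le (perp x) (perp y) -> le y x.
Proof. intro h. rewrite <- (operpK x), <- (operpK y). now apply operp_anti. Qed.

Lemma ole_perp_sym x y : le x (perp y) -> le y (perp x).
Proof. intro h. apply operp_reflect. now rewrite operpK. Qed.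

Lemma osup_is_lub x0 W : is_lub W (osup x0 W).
Proof.
  unfold osup. destruct (excluded_middle_informative _) as [p | n].
  - exact (proj2_sig (constructive_indefinite_description _ p)).
  - destruct HO as (_ & _ & _ & lub_ex & _). now destruct (n (lub_ex W)).
Qed.

Lemma is_lub_ext W W' s : (forall w, W w <-> W' w) -> is_lub W s -> is_lub W' s.
Proof.
  intros e [ub least]; split.
  - intros w hw. apply ub, e, hw.
  - intros u hu. apply least. intros w hw. apply hu, e, hw.
Qed.

Lemma osup_eq x0 W s : is_lub W s -> osup x0 W = s.
Proof.
  intros [ub least]. destruct (osup_is_lub x0 W) as [ub' least'].
  apply ole_antisym; auto.
Qed.

Lemma osup_ext x0 x1 W W' : (forall w, W w <-> W' w) -> osup x0 W = osup x1 W'.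
Proof.
  intro e. apply osup_eq, (is_lub_ext (W := W')); [firstorder | apply osup_is_lub].
Qed.

Lemma osup_ub x0 W w : W w -> le w (osup x0 W).
Proof. apply osup_is_lub. Qed.

Lemma osup_least x0 W u : (forall w, W w -> le w u) -> le (osup x0 W) u.
Proof. apply osup_is_lub. Qed.

Lemma join2_l a b : le a (join2 a b). Proof. apply osup_ub. now left. Qed.
Lemma join2_r a b : le b (join2 a b). Proof. apply osup_ub. now right. Qed.

Lemma join2_least a b u : le a u -> le b u -> le (join2 a b) u.
Proof. intros. apply osup_least. now intros w [-> | ->]. Qed.

Lemma meet2_l a b : le (meet2 a b) a.
Proof. unfold meet2. apply operp_reflect. rewrite operpK. apply join2_l. Qed.

Lemma meet2_r a b : le (meet2 a b) b.
Proof. unfold meet2. apply operp_reflect. rewrite operpK. apply join2_r. Qed.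

Lemma meet2_greatest a b z : le z a -> le z b -> le z (meet2 a b).
Proof. intros. unfold meet2. apply ole_perp_sym, join2_least; now apply operp_anti. Qed.

Lemma join2_mono a b c d : le a c -> le b d -> le (join2 a b) (join2 c d).
Proof. intros. apply join2_least; eapply ole_trans; eauto using join2_l, join2_r. Qed.

Lemma meet2_mono a b c d : le a c -> le b d -> le (meet2 a b) (meet2 c d).
Proof.
  intros. apply meet2_greatest; [eapply ole_trans with a | eapply ole_trans with b];
    auto using meet2_l, meet2_r.
Qed.

Lemma join2C a b : join2 a b = join2 b a.
Proof. apply ole_antisym; apply join2_least; auto using join2_l, join2_r. Qed.

Lemma meet2C a b : meet2 a b = meet2 b a.
Proof. apply ole_antisym; apply meet2_greatest; auto using meet2_l, meet2_r. Qed.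

Lemma otop_top x0 y : le y (otop x0).
Proof. now apply osup_ub. Qed.

(* The default [x0] of [otop x0] matters only when no top exists. *)
Lemma otop_indep x0 x1 : otop x0 = otop x1.
Proof. now apply osup_ext. Qed.

Lemma oml_dual a b : le a b -> a = meet2 b (join2 a (perp b)).
Proof.
  intro h. apply operp_anti, oml_law in h.
  unfold meet2 in *. rewrite !operpK in h. now rewrite <- h, operpK.
Qed.

Lemma sasaki_mono m x y : le x y -> le (sasaki m x) (sasaki m y).
Proof. intro. apply meet2_mono, join2_mono; auto using ole_refl. Qed.

Lemma sasaki_top m x0 : sasaki m (otop x0) = m.
Proof.
  apply ole_antisym; [apply meet2_l |].
  apply meet2_greatest; [apply ole_refl |].
  eapply ole_trans; [apply otop_top with (x0 := x0) | apply join2_r].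
Qed.

Lemma sasaki_galois m x y : le (sasaki m x) y <-> le x (join2 (perp m) (meet2 m y)).
Proof.
  split; intro h.
  - assert (e := oml_law (join2_l (perp m) x)). rewrite operpK in e.
    eapply ole_trans; [apply join2_r |]. rewrite e. apply join2_mono; [apply ole_refl |].
    apply meet2_greatest; [apply meet2_r |]. eapply ole_trans; [| exact h].
    unfold sasaki. rewrite meet2C. apply ole_refl.
  - eapply ole_trans; [apply sasaki_mono, h |].
    eapply ole_trans with (meet2 m (join2 (meet2 m y) (perp m))).
    + apply meet2_mono; [apply ole_refl |].
      apply join2_least; [apply join2_r |]. rewrite join2C. apply ole_refl.
    + rewrite <- (oml_dual (meet2_l m y)). apply meet2_r.
Qed.

Lemma sasaki_adjoint m : adjoint (sasaki m) (sasaki m).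
Proof. intros x y. rewrite sasaki_galois. unfold sasaki, meet2. rewrite !operpK. tauto. Qed.

End CompleteOML.

Section LinOperations.
Variable O : OrthoSig.
Hypothesis HO : is_cOML O.
Local Notation le := (@ole O).
Local Notation perp := (@operp O).
Implicit Types (f g : car O -> car O) (p q : LinT O) (F : LinT O -> Prop).

Lemma LinT_ext p q : (forall x, val p x = val q x) -> p = q.
Proof. intro e. apply sig_val_inj, functional_extensionality, e. Qed.

Lemma adjoint_sym f g : adjoint f g -> adjoint g f.
Proof.
  intros A x y. split; intro h; apply (ole_perp_sym HO), A, (ole_perp_sym HO), h.
Qed.

Lemma adjoint_unique f g g' : adjoint f g -> adjoint f g' -> g = g'.
Proof.
  intros A B. apply functional_extensionality. intro y.
  assert (e : perp (g y) = perp (g' y)).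
  { apply (ole_antisym HO); [apply B, A | apply A, B]; apply (ole_refl HO). }
  now rewrite <- (operpK HO (g y)), e, (operpK HO).
Qed.

Lemma adjoint_mono f g x y : adjoint f g -> le x y -> le (f x) (f y).
Proof.
  intros A h. rewrite <- (operpK HO (f y)). apply A.
  eapply (ole_trans HO); [exact h |]. apply A. rewrite (operpK HO). apply (ole_refl HO).
Qed.

Lemma adjoint_is_lub f g W s : adjoint f g -> is_lub W s -> is_lub (image f W) (f s).
Proof.
  intros A [ub least]. split.
  - intros w [v [hv ->]]. eapply adjoint_mono; eauto.
  - intros u hu. rewrite <- (operpK HO u). apply A, least. intros w hw.
    apply A. rewrite (operpK HO). apply hu. now exists w.
Qed.

Lemma adjoint_comp f g f' g' :
  adjoint f f' -> adjoint g g' -> adjoint (fun x => f (g x)) (fun y => g' (f' y)).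
Proof. intros A B x y. rewrite (A (g x) y), (B x (f' y)). tauto. Qed.

Lemma toLin_val f g : adjoint f g -> val (toLin f) = f.
Proof.
  intro A. unfold toLin. destruct (excluded_middle_informative _) as [p | n]; [reflexivity |].
  destruct n. now exists g.
Qed.

Lemma linStar_adjoint p : adjoint (val p) (val (linStar p)).
Proof.
  unfold linStar. destruct (constructive_indefinite_description _ (proj2_sig p)) as [g A].
  cbn. rewrite (toLin_val (g := val p)); [exact A |]. now apply adjoint_sym.
Qed.

Lemma linStar_val p g : adjoint (val p) g -> val (linStar p) = g.
Proof. intro A. eapply adjoint_unique; [apply linStar_adjoint | exact A]. Qed.

Lemma linComp_val p q : val (linComp p q) = fun x => val p (val q x).
Proof.
  apply toLin_val with (g := fun y => val (linStar q) (val (linStar p) y)).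
  apply adjoint_comp; apply linStar_adjoint.
Qed.

Lemma linJoin_adjoint F :
  adjoint (fun x => osup x (fun y => exists p, F p /\ y = val p x))
          (fun y => osup y (fun z => exists p, F p /\ z = val (linStar p) y)).
Proof.
  intros x y. split; intro h.
  - apply (ole_perp_sym HO), (osup_least HO). intros w [p [hp ->]].
    apply (ole_perp_sym HO), (linStar_adjoint p).
    eapply (ole_trans HO); [| exact h]. apply (osup_ub HO). eauto.
  - apply (osup_least HO). intros w [p [hp ->]]. apply (linStar_adjoint p).
    eapply (ole_trans HO); [exact h |]. apply (operp_anti HO), (osup_ub HO). eauto.
Qed.

Lemma linJoin_val F : val (linJoin F) = fun x => osup x (fun y => exists p, F p /\ y = val p x).
Proof. eapply toLin_val, linJoin_adjoint. Qed.

Lemma linJoin_pair_val p q x : val (linJoin (pair p q)) x = join2 (val p x) (val q x).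
Proof.
  rewrite linJoin_val. apply (osup_ext HO). intro w; split.
  - intros [r [[-> | ->] ->]]; [left | right]; reflexivity.
  - intros [-> | ->]; eexists; split; eauto; [left | right]; reflexivity.
Qed.

Lemma linNeg_val p x : val (linNeg p) x = sasaki (perp (val p (otop x))) x.
Proof.
  unfold linNeg. rewrite (toLin_val (g := sasaki (perp (val p (otop x))))); [reflexivity |].
  replace (fun y => sasaki (perp (val p (otop y))) y) with (sasaki (perp (val p (otop x)))).
  - apply (sasaki_adjoint HO).
  - apply functional_extensionality. intro y. now rewrite (otop_indep HO x y).
Qed.

Lemma linNeg_top p x : val (linNeg p) (otop x) = perp (val p (otop x)).
Proof. rewrite linNeg_val, (otop_indep HO (otop x) x). apply (sasaki_top HO). Qed.

Lemma linNeg2_val p x : val (linNeg (linNeg p)) x = sasaki (val p (otop x)) x.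
Proof. now rewrite linNeg_val, linNeg_top, (operpK HO). Qed.

Lemma linNeg2_top p x : val (linNeg (linNeg p)) (otop x) = val p (otop x).
Proof. rewrite linNeg2_val, (otop_indep HO (otop x) x). apply (sasaki_top HO). Qed.

Lemma Lin_ile p q : ile (K := Lin O) p q <-> forall x, le (val p x) (val q x).
Proof.
  unfold ile; cbn. split.
  - intros e x. rewrite <- e, linJoin_pair_val. apply (join2_l HO).
  - intro h. apply LinT_ext. intro x. rewrite linJoin_pair_val.
    apply (ole_antisym HO); [apply (join2_least HO) | apply (join2_r HO)];
      [apply h | apply (ole_refl HO)].
Qed.

Lemma Lin_join_is_lub F :
  (forall p, F p -> ile (K := Lin O) p (linJoin F)) /\
  (forall u, (forall p, F p -> ile (K := Lin O) p u) -> ile (K := Lin O) (linJoin F) u).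
Proof.
  split.
  - intros p hp. apply Lin_ile. intro x. rewrite linJoin_val. apply (osup_ub HO). eauto.
  - intros u hu. apply Lin_ile. intro x. rewrite linJoin_val. apply (osup_least HO).
    intros y [p [hp ->]]. now apply Lin_ile, hu.
Qed.

Lemma linComp_joinr p F : linComp p (linJoin F) = linJoin (image (linComp p) F).
Proof.
  apply LinT_ext. intro x. rewrite linComp_val, !linJoin_val. symmetry.
  apply (osup_eq HO). destruct (proj2_sig p) as [g A].
  apply (is_lub_ext (W := image (val p) (fun y => exists q, F q /\ y = val q x))).
  - intro v; split.
    + intros [y [[q [hq ->]] ->]]. exists (linComp p q). rewrite linComp_val.
      split; [now exists q | reflexivity].
    + intros [r [[q [hq ->]] ->]]. exists (val q x). rewrite linComp_val.
      split; [now exists q | reflexivity].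
  - eapply adjoint_is_lub; [exact A | apply (osup_is_lub HO)].
Qed.

Lemma linComp_joinl p F : linComp (linJoin F) p = linJoin (image (fun q => linComp q p) F).
Proof.
  apply LinT_ext. intro x. rewrite linComp_val, !linJoin_val.
  apply (osup_ext HO). intro v; split.
  - intros [q [hq ->]]. exists (linComp q p). rewrite linComp_val.
    split; [now exists q | reflexivity].
  - intros [r [[q [hq ->]] ->]]. rewrite linComp_val. eauto.
Qed.

Lemma linStarK p : linStar (linStar p) = p.
Proof. apply sig_val_inj, linStar_val, adjoint_sym, linStar_adjoint. Qed.

Lemma linStar_comp p q : linStar (linComp p q) = linComp (linStar q) (linStar p).
Proof.
  apply sig_val_inj, linStar_val. rewrite !linComp_val.
  apply adjoint_comp; apply linStar_adjoint.
Qed.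

Lemma linStar_join F : linStar (linJoin F) = linJoin (image (@linStar O) F).
Proof.
  apply sig_val_inj, linStar_val. rewrite !linJoin_val.
  replace (fun x => osup x (fun y => exists p, image (@linStar O) F p /\ y = val p x))
    with (fun y => osup y (fun z => exists p, F p /\ z = val (linStar p) y)).
  - apply linJoin_adjoint.
  - apply functional_extensionality. intro x. apply (osup_ext HO). intro v; split.
    + intros [p [hp ->]]. exists (linStar p). split; [now exists p | reflexivity].
    + intros [r [[p [hp ->]] ->]]. eauto.
Qed.

Lemma linStar_neg p : linStar (linNeg p) = linNeg p.
Proof.
  apply sig_val_inj, linStar_val. intros x y.
  rewrite !linNeg_val, (otop_indep HO x y). apply (sasaki_adjoint HO).
Qed.

Lemma linNeg_comp_neg2 p q : linNeg (linComp p (linNeg (linNeg q))) = linNeg (linComp p q).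
Proof. apply LinT_ext. intro x. now rewrite !linNeg_val, !linComp_val, linNeg2_top. Qed.

Lemma linNeg_join_neg2 F :
  linNeg (linJoin (image (fun p => linNeg (linNeg p)) F)) = linNeg (linJoin F).
Proof.
  apply LinT_ext. intro x. rewrite !linNeg_val, !linJoin_val.
  do 2 f_equal. apply (osup_ext HO). intro v; split.
  - intros [r [[p [hp ->]] ->]]. rewrite linNeg2_top. eauto.
  - intros [p [hp ->]]. exists (linNeg (linNeg p)). rewrite linNeg2_top.
    split; [now exists p | reflexivity].
Qed.

(* Both sides are the Sasaki projection onto p(1) /\ (p(1)^perp \/ q(1)), written
   as [sasaki p(1) q(1)] on the left and by De Morgan on the right. *)
Lemma linNeg2_comp_neg2 p q :
  linNeg (linNeg (linComp (linNeg (linNeg p)) q)) =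
  linNeg (linJoin (pair (linNeg p) (linNeg (linJoin (pair (linNeg p) q))))).
Proof.
  apply LinT_ext. intro x.
  rewrite linNeg2_val, linComp_val, linNeg2_val, (otop_indep HO (val q (otop x)) x).
  rewrite linNeg_val, !linJoin_pair_val, !linNeg_top, linJoin_pair_val, linNeg_top.
  reflexivity.
Qed.

Lemma Lin_is_IDA : is_IDA (Lin O).
Proof.
  unfold is_IDA; cbn. repeat split; intros.
  - apply Lin_ile. intro. apply (ole_refl HO).
  - apply LinT_ext. intro. apply (ole_antisym HO); apply Lin_ile; assumption.
  - apply Lin_ile. intro. eapply (ole_trans HO); apply Lin_ile; eassumption.
  - now apply Lin_join_is_lub.
  - now apply Lin_join_is_lub.
  - apply LinT_ext. intro. now rewrite !linComp_val.
  - apply LinT_ext. intro. now rewrite linComp_val.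
  - apply LinT_ext. intro. now rewrite linComp_val.
  - apply linComp_joinr.
  - apply linComp_joinl.
  - apply linStarK.
  - apply linStar_comp.
  - apply linStar_join.
  - apply linNeg_comp_neg2.
  - apply linNeg_join_neg2.
  - apply linStar_neg.
  - apply linNeg2_comp_neg2.
Qed.

End LinOperations.

Lemma ortho_iso_sym (M1 M2 : OrthoSig) (k : car M1 -> car M2) (kinv : car M2 -> car M1) :
  ortho_iso k kinv -> ortho_iso kinv k.
Proof.
  intros (kK & kinvK & k_le & k_perp). split; [exact kinvK | split; [exact kK | split]].
  - intros m n. now rewrite k_le, !kinvK.
  - intro m. rewrite <- (kK (operp (kinv m))), k_perp, kinvK. reflexivity.
Qed.

Section Conjugation.
Variables M1 M2 : OrthoSig.
Hypotheses (H1 : is_cOML M1) (H2 : is_cOML M2).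
Variables (k : car M1 -> car M2) (kinv : car M2 -> car M1).
Hypothesis Hk : ortho_iso k kinv.

Lemma kK m : kinv (k m) = m. Proof. apply Hk. Qed.
Lemma kinvK n : k (kinv n) = n. Proof. apply Hk. Qed.
Lemma k_ole m n : ole m n <-> ole (k m) (k n). Proof. apply Hk. Qed.
Lemma k_operp m : k (operp m) = operp (k m). Proof. apply Hk. Qed.

Lemma k_is_lub W s : is_lub W s -> is_lub (image k W) (k s).
Proof.
  intros [ub least]. split.
  - intros w [v [hv ->]]. apply k_ole, ub, hv.
  - intros u hu. rewrite <- (kinvK u). apply k_ole, least. intros w hw.
    apply k_ole. rewrite kinvK. apply hu. now exists w.
Qed.

Lemma k_osup x0 y0 W (W' : car M2 -> Prop) :
  (forall z, W' z <-> image k W z) -> k (osup x0 W) = osup y0 W'.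
Proof.
  intro e. symmetry. apply (osup_eq H2), (is_lub_ext (W := image k W)).
  - intro z. symmetry. apply e.
  - apply k_is_lub, (osup_is_lub H1).
Qed.

Lemma k_join2 a b : k (join2 a b) = join2 (k a) (k b).
Proof.
  apply k_osup. intro z; split.
  - intros [-> | ->]; [exists a; split; [left |] | exists b; split; [right |]]; reflexivity.
  - intros [w [[-> | ->] ->]]; [left | right]; reflexivity.
Qed.

Lemma k_sasaki m x : k (sasaki m x) = sasaki (k m) (k x).
Proof. unfold sasaki, meet2. now rewrite k_operp, k_join2, !k_operp, k_join2, k_operp. Qed.

Lemma k_otop x0 y0 : k (otop x0) = otop y0.
Proof.
  apply k_osup. intro z; split; [intros _ | now intros _].
  exists (kinv z). split; [exact I | now rewrite kinvK].
Qed.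

Definition conj_fun (f : car M1 -> car M1) : car M2 -> car M2 := fun x => k (f (kinv x)).

Lemma conj_fun_adjoint f g : adjoint f g -> adjoint (conj_fun f) (conj_fun g).
Proof.
  intros A x y. unfold conj_fun.
  rewrite <- (kinvK y) at 1.
  rewrite <- k_operp, <- k_ole, (A (kinv x) (kinv y)), k_ole, kinvK, k_operp.
  reflexivity.
Qed.

Definition conjL (p : LinT M1) : LinT M2 := toLin (conj_fun (val p)).

Lemma conjL_val p : val (conjL p) = conj_fun (val p).
Proof.
  destruct (proj2_sig p) as [g A].
  apply toLin_val with (g := conj_fun g), conj_fun_adjoint, A.
Qed.

Lemma conjL_morphism : IDA_morphism (K := Lin M1) (L := Lin M2) conjL.
Proof.
  unfold IDA_morphism; cbn. repeat split.
  - intro F. apply LinT_ext. intro x. rewrite conjL_val, !(linJoin_val H1), (linJoin_val H2).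
    apply k_osup. intro z; split.
    + intros [q [[p [hp ->]] ->]]. exists (val p (kinv x)).
      rewrite conjL_val. split; [eauto | reflexivity].
    + intros [w [[p [hp ->]] ->]]. exists (conjL p).
      rewrite conjL_val. split; [now exists p | reflexivity].
  - intros p q. apply LinT_ext. intro x.
    rewrite conjL_val, (linComp_val H1), (linComp_val H2), !conjL_val. unfold conj_fun.
    now rewrite kK.
  - intro p. apply sig_val_inj. rewrite conjL_val. symmetry. apply (linStar_val H2).
    rewrite !conjL_val. apply conj_fun_adjoint, (linStar_adjoint H1).
  - apply LinT_ext. intro x. rewrite conjL_val. apply kinvK.
  - intro p. apply LinT_ext. intro x. rewrite conjL_val. unfold conj_fun.
    rewrite (linNeg_val H1), (linNeg_val H2), k_sasaki, k_operp, kinvK, conjL_val.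
    unfold conj_fun. now rewrite <- (k_otop (kinv x) x), kK.
Qed.

End Conjugation.

Lemma conjLK (M1 M2 : OrthoSig) (k : car M1 -> car M2) (kinv : car M2 -> car M1)
  (Hk : ortho_iso k kinv) p : conjL kinv k (conjL k kinv p) = p.
Proof.
  apply LinT_ext. intro x.
  rewrite (conjL_val (ortho_iso_sym Hk)), (conjL_val Hk). unfold conj_fun.
  now rewrite !(kK Hk).
Qed.

Lemma Pneg_eq (O : OrthoSig) (HO : is_cOML O) (L : LinT O -> Prop) (A : Pcar L) :
  Pneg A = fun c => val c = linNeg (linJoin (image val A)).
Proof.
  apply functional_extensionality. intro c. unfold Pneg, linNeg.
  do 2 f_equal. apply functional_extensionality. intro x. do 2 f_equal.
  rewrite (linJoin_val HO). apply (osup_ext HO). intro y; split.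
  - intros [a [ha ->]]. exists (val a). split; [now exists a | reflexivity].
  - intros [f [[a [ha ->]] ->]]. eauto.
Qed.

Section PowTransport.
Variables M1 M2 : OrthoSig.
Hypotheses (H1 : is_cOML M1) (H2 : is_cOML M2).
Variables (L1 : LinT M1 -> Prop) (L2 : LinT M2 -> Prop).
Variables (phi : LinT M1 -> LinT M2) (psi : LinT M2 -> LinT M1).
Hypothesis phi_morphism : IDA_morphism (K := Lin M1) (L := Lin M2) phi.
Hypotheses (psiK : forall p, psi (phi p) = p) (phiK : forall q, phi (psi q) = q).
Hypotheses (phi_L : forall p, L1 p -> L2 (phi p)) (psi_L : forall q, L2 q -> L1 (psi q)).

Definition subL_map (a : subL L1) : subL L2 := exist L2 (phi (val a)) (phi_L (proj2_sig a)).
Definition subL_comap (b : subL L2) : subL L1 := exist L1 (psi (val b)) (psi_L (proj2_sig b)).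

Definition Pmap (A : Pcar L1) : Pcar L2 := fun b => A (subL_comap b).

Lemma subL_comap_map a : subL_comap (subL_map a) = a.
Proof. apply sig_val_inj, psiK. Qed.

Lemma subL_map_comap b : subL_map (subL_comap b) = b.
Proof. apply sig_val_inj, phiK. Qed.

Lemma psi_eq_iff q p : psi q = p <-> q = phi p.
Proof. split; [intros <-; now rewrite phiK | intros ->; apply psiK]. Qed.

Lemma Pmap_join W : Pmap (Pjoin W) = Pjoin (image Pmap W).
Proof.
  apply pred_ext. intro b. split.
  - intros [A [hA hb]]. exists (Pmap A). split; [now exists A | exact hb].
  - intros [B [[A [hA ->]] hb]]. now exists A.
Qed.

Lemma Pmap_mul A B : Pmap (Pmul A B) = Pmul (Pmap A) (Pmap B).
Proof.
  destruct phi_morphism as (_ & phi_comp & _); cbn in *.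
  apply pred_ext. intro c. unfold Pmap, Pmul; cbn. split.
  - intros (a & b & ha & hb & e). apply psi_eq_iff in e.
    exists (subL_map a), (subL_map b). rewrite !subL_comap_map. now rewrite e, phi_comp.
  - intros (a & b & ha & hb & e). exists (subL_comap a), (subL_comap b).
    split; [exact ha | split; [exact hb |]].
    apply psi_eq_iff. cbn. now rewrite e, phi_comp, !phiK.
Qed.

Lemma Pmap_star A : Pmap (Pstar A) = Pstar (Pmap A).
Proof.
  destruct phi_morphism as (_ & _ & phi_star & _); cbn in *.
  apply pred_ext. intro c. unfold Pmap, Pstar; cbn. split.
  - intros (a & ha & e). apply psi_eq_iff in e.
    exists (subL_map a). rewrite subL_comap_map. now rewrite e, phi_star.
  - intros (a & ha & e). exists (subL_comap a). split; [exact ha |].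
    apply psi_eq_iff. cbn. now rewrite e, phi_star, phiK.
Qed.

Lemma Pmap_unit : Pmap (Punit (L := L1)) = Punit (L := L2).
Proof.
  destruct phi_morphism as (_ & _ & _ & phi_unit & _); cbn in *.
  apply pred_ext. intro c. unfold Pmap, Punit; cbn. now rewrite psi_eq_iff, phi_unit.
Qed.

Lemma image_val_Pmap A : image val (Pmap A) = image phi (image val A).
Proof.
  apply pred_ext. intro f. split.
  - intros [b [hb ->]]. exists (val (subL_comap b)). split; [now exists (subL_comap b) |].
    cbn. now rewrite phiK.
  - intros [g [[a [ha ->]] ->]]. exists (subL_map a). split; [| reflexivity].
    unfold Pmap. now rewrite subL_comap_map.
Qed.

Lemma Pmap_neg A : Pmap (Pneg A) = Pneg (Pmap A).
Proof.
  destruct phi_morphism as (phi_join & _ & _ & _ & phi_neg); cbn in *.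
  rewrite (Pneg_eq H2), image_val_Pmap. unfold Pmap. rewrite (Pneg_eq H1).
  apply pred_ext. intro c. cbn. now rewrite psi_eq_iff, phi_neg, phi_join.
Qed.

Lemma Pmap_morphism : IDA_morphism (K := Pow L1) (L := Pow L2) Pmap.
Proof.
  split; [exact Pmap_join | split; [exact Pmap_mul | split; [exact Pmap_star |]]].
  split; [exact Pmap_unit | exact Pmap_neg].
Qed.

Lemma Pmap_bijective : bijectiveF Pmap.
Proof.
  split.
  - intros A B e. apply pred_ext. intro a.
    rewrite <- (subL_comap_map a). change (Pmap A (subL_map a) <-> Pmap B (subL_map a)).
    now rewrite e.
  - intro B. exists (fun a => B (subL_map a)). apply pred_ext. intro b.
    unfold Pmap. now rewrite subL_map_comap.
Qed.

End PowTransport.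

Lemma GammaMap_Pmap (T : TFun) (M1 M2 : OrthoSig) (k : car M1 -> car M2)
  (kinv : car M2 -> car M1) (Hk : ortho_iso k kinv)
  (conj_T : forall q, T (Lin M2) q -> T (Lin M1) (conjL kinv k q)) :
  @GammaMap T M1 M2 k kinv = Pmap conj_T.
Proof.
  apply functional_extensionality. intro A. apply pred_ext. intro b.
  unfold GammaMap, Pmap, subL_comap. split.
  - intros [a [ha e]]. replace (exist _ _ _) with a; [exact ha |].
    apply sig_val_inj. cbn. rewrite <- (conjLK Hk (val a)). f_equal.
    apply sig_val_inj. now rewrite (conjL_val Hk).
  - intro hb. eexists. split; [exact hb |].
    change (val (val b) = conj_fun k kinv (val (conjL kinv k (val b)))).
    now rewrite <- (conjL_val Hk), (conjLK (ortho_iso_sym Hk)).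
Qed.

Theorem lemma5p2 (T : TFun) (HT1 : T1 T) (HT2 : T2 T) (HT3 : T3 T) (HT4 : T4 T)
  (M1 M2 : OrthoSig) (HM1 : is_cOML M1) (HM2 : is_cOML M2)
  (k : car M1 -> car M2) (kinv : car M2 -> car M1) (Hk : @ortho_iso M1 M2 k kinv) :
  @IDA_morphism (Gamma T M1) (Gamma T M2) (@GammaMap T M1 M2 k kinv) /\ bijectiveF (@GammaMap T M1 M2 k kinv).
Proof.
  pose proof (ortho_iso_sym Hk) as Hk'.
  pose proof (conjL_morphism HM1 HM2 Hk) as conj_morphism.
  pose proof (HT4 _ _ _ (Lin_is_IDA HM1) (Lin_is_IDA HM2) conj_morphism) as conj_T.
  pose proof (HT4 _ _ _ (Lin_is_IDA HM2) (Lin_is_IDA HM1) (conjL_morphism HM2 HM1 Hk'))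
    as conj_T'.
  rewrite (GammaMap_Pmap Hk conj_T').
  split.
  - exact (Pmap_morphism HM1 HM2 conj_morphism (conjLK Hk) (conjLK Hk') conj_T conj_T').
  - exact (Pmap_bijective (conjLK Hk) (conjLK Hk') conj_T conj_T').
Qed.
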